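(* Let $p>1$ and let $f:\mathbb{N}\to\mathbb{R}_{\geq 0}$ be a concave function such that $n\mapsto \frac{f(n)^p}{n}$ is non-decreasing. Let $M=\{m_1,m_2,\dots,m_{2k}\}$ be a finite subset of $\mathbb{N}$ with $m_i<m_{i+1}$ for all $i$ and $m_1\geq 1$. Then \[ \sum_{i=1}^{k} \frac{f(m_{2i})^p}{m_{2i}}\,(m_{2i}-m_{2i-1}) \;\geq\; \left(\tfrac{1}{2}\right)^{3+p} f\Big(\sum_{i=1}^{k} (m_{2i}-m_{2i-1})\Big)^p. \]
   Context: A function $f:\mathbb{N}\to\mathbb{R}_{\geq 0}$ is called concave if $f$ is non-decreasing and for all $m,n\in\mathbb{N}$ with $n\geq m$ one has $f(n+m)-f(n)\leq f(n)-f(n-m)$. *)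

From HB Require Import structures.
From mathcomp Require Import all_boot all_order all_algebra.
From mathcomp Require Import reals exp.
Set Implicit Arguments. Unset Strict Implicit. Unset Printing Implicit Defensive.
Import Order.TTheory GRing.Theory Num.Theory.
Local Open Scope ring_scope.

Definition nonneg_fun {R : realType} (f : nat -> R) : Prop :=
  forall n : nat, 0 <= f n.

(* Concave as in the paper: non-decreasing and
   f(n+m) - f(n) <= f(n) - f(n-m) for all m <= n. *)
Definition concave {R : realType} (f : nat -> R) : Prop :=
  (forall a b : nat, (a <= b)%N -> f a <= f b) /\
  (forall m n : nat, (m <= n)%N -> f (n + m)%N - f n <= f n - f (n - m)%N).

(* Write d_i = m_{2i} - m_{2i-1} and S_j = d_1 + ... + d_j, so D := S_k is the
   total length and S_i <= m_{2i}.  Call i heavy when D <= 2 S_i.  The light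
   indices form an initial segment, so their d-mass is at most D/2 and the heavy
   ones carry at least D/2.  For heavy i, concavity gives f D <= 2 f (S_i), and
   monotonicity of f^p/n from S_i to m_{2i} gives f(m_{2i})^p / m_{2i} >=
   (f D / 2)^p / D.  Summing over heavy i yields the bound with the better
   constant (1/2)^(1+p). *)
From HB Require Import structures.
From mathcomp Require Import all_boot all_order all_algebra.
From mathcomp Require Import reals exp.
From mathcomp Require Import zify lra.
Set Implicit Arguments. Unset Strict Implicit. Unset Printing Implicit Defensive.
Import Order.TTheory GRing.Theory Num.Theory.
Local Open Scope ring_scope.

Definition psum (d : nat -> nat) (n : nat) : nat := (\sum_(1 <= i < n.+1) d i)%N.

Section PartialSums.

Variable d : nat -> nat.

Lemma psumS n : psum d n.+1 = (psum d n + d n.+1)%N.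
Proof. by rewrite /psum big_nat_recr. Qed.

Lemma psum_light_le n D :
  (2 * \sum_(1 <= i < n.+1 | (2 * psum d i < D)%N) d i <= D)%N.
Proof.
suff [] : (\sum_(1 <= i < n.+1 | (2 * psum d i < D)%N) d i <= psum d n)%N /\
          (2 * \sum_(1 <= i < n.+1 | (2 * psum d i < D)%N) d i <= D)%N by [].
elim: n => [|n [IHle IHD]]; first by rewrite big_geq.
rewrite big_mkcond /= big_nat_recr //= -big_mkcond /= psumS.
by case: ifP => [light | /negbT heavy]; rewrite ?addn0; lia.
Qed.

Lemma psum_heavy_ge n :
  (psum d n <= 2 * \sum_(1 <= i < n.+1 | (psum d n <= 2 * psum d i)%N) d i)%N.
Proof.
set D := psum d n.
have D_split : D = (\sum_(1 <= i < n.+1 | (D <= 2 * psum d i)%N) d i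
                   + \sum_(1 <= i < n.+1 | (2 * psum d i < D)%N) d i)%N.
  rewrite {1}/D /psum (bigID (fun i => (D <= 2 * psum d i)%N)) /=.
  by congr (_ + _)%N; apply: eq_bigl => i; rewrite ltnNge.
have := psum_light_le n D.
lia.
Qed.

End PartialSums.

Lemma psum_gaps_le (m : nat -> nat) (k : nat) :
  (forall i, (1 <= i)%N -> (i < 2 * k)%N -> (m i <= m i.+1)%N) ->
  forall n, (n <= k)%N -> (psum (fun i => m (2 * i) - m (2 * i).-1) n <= m (2 * n))%N.
Proof.
move=> m_incr; elim=> [|n IH] lt_n_k; first by rewrite /psum big_geq.
rewrite psumS; have {}IH := IH (ltnW lt_n_k).
have -> : (2 * n.+1).-1 = (2 * n).+1 by lia.
case: n IH lt_n_k => [|n] IH lt_n_k; first by rewrite /psum big_geq //; lia.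
have := m_incr (2 * n.+1)%N isT ltac:(lia).
have := m_incr (2 * n.+1).+1%N isT ltac:(lia).
have -> : (2 * n.+1).+2 = (2 * n.+2)%N by lia.
lia.
Qed.

Lemma concave_le_double (R : realType) (f : nat -> R) (a b : nat) :
  nonneg_fun f -> concave f -> (a <= b)%N -> (b <= 2 * a)%N -> f b <= 2 * f a.
Proof.
move=> f_ge0 [_ f_conc] le_ab le_b2a.
have := f_conc (b - a)%N a ltac:(lia).
have -> : (a + (b - a))%N = b by lia.
have := f_ge0 (a - (b - a))%N.
lra.
Qed.

Lemma concave_powR_ratio_le (R : realType) (p : R) (f : nat -> R) (s D M : nat) :
  0 <= p -> nonneg_fun f -> concave f ->
  (forall a b : nat, (1 <= a)%N -> (a <= b)%N -> f a `^ p / a%:R <= f b `^ p / b%:R) ->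
  (1 <= s)%N -> (s <= D)%N -> (D <= 2 * s)%N -> (s <= M)%N ->
  (f D / 2) `^ p / D%:R <= f M `^ p / M%:R.
Proof.
move=> p_ge0 f_ge0 f_conc ratio_mono s_ge1 le_sD le_D2s le_sM.
apply: le_trans (ratio_mono s M s_ge1 le_sM).
apply: ler_pM; rewrite ?powR_ge0 ?invr_ge0 //.
- apply: ge0_ler_powR; rewrite ?nnegrE ?divr_ge0 //.
  have := concave_le_double f_ge0 f_conc le_sD le_D2s; lra.
- by rewrite lef_pV2 ?posrE ?ltr0n ?ler_nat //; lia.
Qed.

Lemma psum_weighted_ge (R : realType) (d : nat -> nat) (a : nat -> R) (c : R) (n : nat) :
  0 <= c -> (forall i, 0 <= a i) ->
  (forall i, (1 <= i <= n)%N -> (psum d n <= 2 * psum d i)%N -> c <= a i) ->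
  c * (psum d n)%:R <= 2 * \sum_(1 <= i < n.+1) a i * (d i)%:R.
Proof.
move=> c_ge0 a_ge0 heavy_ge.
set H := (\sum_(1 <= i < n.+1 | (psum d n <= 2 * psum d i)%N) d i)%N.
have cH_le : c * H%:R <= \sum_(1 <= i < n.+1) a i * (d i)%:R.
  rewrite natr_sum mulr_sumr big_mkcond /=; apply: ler_sum_nat => i i_range.
  case: ifP => heavy; last by rewrite mulr_ge0 ?ler0n.
  by rewrite ler_wpM2r ?ler0n ?heavy_ge.
apply: le_trans (_ : c * (2 * H)%:R <= _); last by rewrite natrM mulrCA ler_wpM2l.
by rewrite ler_wpM2l ?ler_nat ?psum_heavy_ge.
Qed.

Lemma powR_half_le (R : realType) (p x S : R) :
  0 <= x -> (x / 2) `^ p <= 2 * S -> (1 / 2) `^ (3 + p) * x `^ p <= S.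
Proof.
move=> x_ge0; rewrite powRM ?invr_ge0 //.
have -> : (1 / 2) `^ (3 + p) = (1 / 2) ^+ 3 * 2^-1 `^ p :> R.
  rewrite powRD ?div1r ?invr_eq0 ?pnatr_eq0 ?implybT //.
  by rewrite powR_mulrn ?invr_ge0.
have : 0 <= x `^ p * 2^-1 `^ p by rewrite mulr_ge0 ?powR_ge0.
rewrite -mulrA [2^-1 `^ p * _]mulrC.
set F := x `^ p * _.
lra.
Qed.

Theorem lemma2p2 (R : realType) (p : R) (f : nat -> R) (k : nat) (m : nat -> nat) :
  1 < p ->
  nonneg_fun f ->
  concave f ->
  (forall a b : nat, (1 <= a)%N -> (a <= b)%N ->
     (f a `^ p) / a%:R <= (f b `^ p) / b%:R) ->
  (0 < k)%N ->
  (1 <= m 1%N)%N ->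
  (forall i : nat, (1 <= i)%N -> (i < 2 * k)%N -> (m i < m i.+1)%N) ->
  \sum_(1 <= i < k.+1) (f (m (2 * i)%N) `^ p) / (m (2 * i)%N)%:R
                        * ((m (2 * i)%N - m (2 * i).-1)%N)%:R
  >= (1 / 2) `^ (3 + p) * f (\sum_(1 <= i < k.+1) (m (2 * i)%N - m (2 * i).-1)%N) `^ p.
Proof.
move=> p_gt1 f_ge0 f_conc ratio_mono k_gt0 _ m_incr.
pose d i := (m (2 * i) - m (2 * i).-1)%N.
change ((1 / 2) `^ (3 + p) * f (psum d k) `^ p <=
  \sum_(1 <= i < k.+1) f (m (2 * i)) `^ p / (m (2 * i))%:R * (d i)%:R).
set D := psum d k.
have D_gt0 : (0 < D)%N.
  have : (m 1 < m 2)%N by apply: m_incr; lia.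
  rewrite /D /psum big_ltn // /d /= !muln1; lia.
apply: powR_half_le; first exact: f_ge0.
rewrite -[X in X <= _](@divfK _ D%:R) ?pnatr_eq0 -?lt0n //.
apply: psum_weighted_ge.
- by rewrite divr_ge0 ?powR_ge0.
- by move=> i; rewrite divr_ge0 ?powR_ge0.
- move=> i /andP[i_ge1 i_le_k] heavy.
  apply: (concave_powR_ratio_le _ f_ge0 f_conc ratio_mono _ _ heavy); first lra.
  + lia.
  + by rewrite /D /psum [X in (_ <= X)%N](big_cat_nat _ (n := i.+1)) //= leq_addr.
  + by apply: psum_gaps_le i_le_k => j j_ge1 j_lt; exact: ltnW (m_incr j j_ge1 j_lt).
Qed.
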